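(* Let $\Bbbk$ be an algebraically closed field of characteristic zero and $H$ the $\Bbbk$-algebra generated by $b,c,z$ with relations $b^2=c^2=1$, $bc=cb$, $zb=-bz$, $zc=-cz$, $z^2=0$. Let $e_0=\frac14(1+b)(1+c)$, $e_1=\frac14(1+b)(1-c)$, $e_2=\frac14(1-b)(1+c)$, $e_3=\frac14(1-b)(1-c)$. Then the two-sided ideals of $H$ are exactly the following $49$ pairwise distinct ideals: $(0)$, $(1)$, $(e_0)$, $(e_1)$, $(e_2)$, $(e_3)$, $(e_0+e_1)$, $(e_0+e_2)$, $(e_0+e_3)$, $(e_1+e_2)$, $(e_1+e_3)$, $(e_2+e_3)$, $(e_0+e_1+e_2)$, $(e_0+e_1+e_3)$, $(e_0+e_2+e_3)$, $(e_1+e_2+e_3)$, $(z)$, $(ze_0)$, $(ze_1)$, $(ze_2)$, $(ze_3)$, $(z(e_0+e_1))$, $(z(e_0+e_2))$, $(z(e_0+e_3))$, $(z(e_1+e_2))$, $(z(e_1+e_3))$, $(z(e_2+e_3))$, $(z(e_0+e_1+e_2))$, $(z(e_0+e_1+e_3))$, $(z(e_0+e_2+e_3))$, $(z(e_1+e_2+e_3))$, $(z+e_0)$, $(ze_1+e_0)$, $(ze_2+e_0)$, $(z+e_1)$, $(ze_0+e_1)$, $(ze_3+e_1)$, $(z+e_2)$, $(ze_0+e_2)$, $(ze_3+e_2)$, $(z+e_3)$, $(ze_1+e_3)$, $(ze_2+e_3)$, $(z+e_0+e_3)$, $(ze_1+e_0+e_3)$, $(ze_2+e_0+e_3)$, $(z+e_1+e_2)$,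 $(ze_0+e_1+e_2)$, $(ze_3+e_1+e_2)$.
   Context: $(a)$ denotes the two-sided ideal of $H$ generated by $a$. *)

From HB Require Import structures.
From mathcomp Require Import all_boot all_order all_algebra.
Set Implicit Arguments. Unset Strict Implicit. Unset Printing Implicit Defensive.
Import Order.TTheory GRing.Theory Num.Theory.
Local Open Scope ring_scope.

(* H has k-basis b^i c^j z^l (i,j,l in {0,1}); we realise H through its
   (faithful) left regular representation on k^8.  The basis vector with
   index n < 8 is b^(bit0 n) c^(bit1 n) z^(bit2 n). *)

Definition bitb (n : nat) : bool := odd n.
Definition bitc (n : nat) : bool := odd n./2.
Definition bitz (n : nat) : bool := odd n./2./2.

Section H.
Variable k : fieldType.

Definition Hb : 'M[k]_8 := \matrix_(r, s)
  ((bitb r != bitb s) && (bitc r == bitc s) && (bitz r == bitz s))%:R.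
Definition Hc : 'M[k]_8 := \matrix_(r, s)
  ((bitb r == bitb s) && (bitc r != bitc s) && (bitz r == bitz s))%:R.
(* left multiplication by z : b^i c^j |-> (-1)^(i+j) b^i c^j z,  b^i c^j z |-> 0 *)
Definition Hz : 'M[k]_8 := \matrix_(r, s)
  (if [&& ~~ bitz s, bitz r, bitb r == bitb s & bitc r == bitc s]
   then (-1) ^+ (bitb s + bitc s) else 0).

Definition Hmono (n : 'I_8) : 'M[k]_8 :=
  Hb ^+ bitb n * Hc ^+ bitc n * Hz ^+ bitz n.

Definition inH (x : 'M[k]_8) : Prop :=
  exists l : 'I_8 -> k, x = \sum_(n < 8) l n *: Hmono n.

Definition is_ideal (I : 'M[k]_8 -> Prop) : Prop :=
  [/\ forall x, I x -> inH x,
      I 0,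
      forall x y, I x -> I y -> I (x + y)
    & forall h x, inH h -> I x -> I (h * x) /\ I (x * h)].

Definition gen_ideal (a : 'M[k]_8) : 'M[k]_8 -> Prop :=
  fun x => forall I, is_ideal I -> I a -> I x.

Definition same_ideal (I J : 'M[k]_8 -> Prop) : Prop := forall x, I x <-> J x.

Definition e0 : 'M[k]_8 := (4%:R)^-1 *: ((1 + Hb) * (1 + Hc)).
Definition e1 : 'M[k]_8 := (4%:R)^-1 *: ((1 + Hb) * (1 - Hc)).
Definition e2 : 'M[k]_8 := (4%:R)^-1 *: ((1 - Hb) * (1 + Hc)).
Definition e3 : 'M[k]_8 := (4%:R)^-1 *: ((1 - Hb) * (1 - Hc)).

Definition gens49 : seq 'M[k]_8 :=
  [:: 0; 1; e0; e1; e2; e3; e0 + e1; e0 + e2; e0 + e3; e1 + e2; e1 + e3;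
      e2 + e3; e0 + e1 + e2; e0 + e1 + e3; e0 + e2 + e3; e1 + e2 + e3;
      Hz; Hz * e0; Hz * e1; Hz * e2; Hz * e3; Hz * (e0 + e1); Hz * (e0 + e2);
      Hz * (e0 + e3); Hz * (e1 + e2); Hz * (e1 + e3); Hz * (e2 + e3);
      Hz * (e0 + e1 + e2); Hz * (e0 + e1 + e3); Hz * (e0 + e2 + e3);
      Hz * (e1 + e2 + e3);
      Hz + e0; Hz * e1 + e0; Hz * e2 + e0;
      Hz + e1; Hz * e0 + e1; Hz * e3 + e1;
      Hz + e2; Hz * e0 + e2; Hz * e3 + e2;
      Hz + e3; Hz * e1 + e3; Hz * e2 + e3;
      Hz + e0 + e3; Hz * e1 + e0 + e3; Hz * e2 + e0 + e3;
      Hz + e1 + e2; Hz * e0 + e1 + e2; Hz * e3 + e1 + e2].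

End H.

(* The commuting involutions b and c split 1 into four orthogonal idempotents
   e_p, indexed by the pair p of signs by which b and c act on them, and
   z e_p = e_(-p) z.  Hence H has the basis e_p, z e_p, whose products are basis
   elements or 0, and each basis element can be cut out of any element of H by
   multiplying it on both sides by suitable e's.  So a two-sided ideal is spanned
   by the basis elements it contains, and this support is closed under
   e_p |-> z e_p and e_p |-> e_p z = z e_(-p); conversely, every closed support
   spans an ideal.  Exactly 49 of the 2^8 supports are closed, and they are the
   closures of the supports of the 49 listed generators. *)

From mathcomp Require Import all_boot all_order all_algebra.
From Stdlib Require Import ClassicalEpsilon.
Set Implicit Arguments. Unset Strict Implicit. Unset Printing Implicit Defensive.
Import GRing.Theory.
Local Open Scope ring_scope.

(** * Eigenprojections of an involution *)

Section Eigenprojections.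
Variables (k : fieldType) (R : algType k).
Hypothesis two_neq0 : 2%:R != 0 :> k.

Definition eigproj (x : R) (s : bool) : R := 2^-1 *: (1 + (-1) ^+ s *: x).

Variable x : R.
Hypothesis xx : x * x = 1.

Lemma mul_eigproj s : x * eigproj x s = (-1) ^+ s *: eigproj x s.
Proof.
rewrite /eigproj -scalerAr scalerA mulrC -scalerA; congr (_ *: _).
by rewrite mulrDr mulr1 -scalerAr xx scalerDr scalerA -expr2 sqrr_sign scale1r addrC.
Qed.

Lemma eigprojM s t : eigproj x s * eigproj x t = if s == t then eigproj x s else 0.
Proof.
have -> : eigproj x s * eigproj x t = 2^-1 *: (eigproj x t + (-1) ^+ s *: (x * eigproj x t)).
  by rewrite /eigproj -scalerAl mulrDl mul1r -scalerAl.
rewrite mul_eigproj scalerA -signr_addb.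
case: s t => [] [] /=; rewrite ?expr0 ?expr1 ?scale1r ?scaleN1r ?subrr ?scaler0 //.
all: by rewrite -mulr2n -scaler_nat scalerA mulVf // scale1r.
Qed.

Lemma sum_eigproj : \sum_s eigproj x s = 1.
Proof.
rewrite big_bool /= /eigproj -scalerDr expr1 expr0 scaleN1r scale1r.
by rewrite addrACA addNr addr0 -mulr2n -scaler_nat scalerA mulVf // scale1r.
Qed.

Lemma comm_eigproj y s : GRing.comm y x -> GRing.comm y (eigproj x s).
Proof.
move=> yx; rewrite /GRing.comm /eigproj -scalerAr -scalerAl; congr (_ *: _).
by rewrite mulrDr mulrDl mulr1 mul1r -scalerAr -scalerAl yx.
Qed.

Lemma anticomm_eigproj y s : y * x = - (x * y) -> y * eigproj x s = eigproj x (~~ s) * y.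
Proof.
move=> yx; rewrite /eigproj -scalerAr -scalerAl; congr (_ *: _).
rewrite mulrDr mulrDl mulr1 mul1r -scalerAr -scalerAl yx scalerN -scaleNr.
by case: s; rewrite /= ?expr0 ?expr1 ?opprK.
Qed.

End Eigenprojections.

(** * The basis of primitive idempotents *)

Record H_relations (R : pzRingType) (b c z : R) : Prop := {
  rel_bb : b * b = 1;
  rel_cc : c * c = 1;
  rel_bc : b * c = c * b;
  rel_zb : z * b = - (b * z);
  rel_zc : z * c = - (c * z);
  rel_zz : z * z = 0 }.

Definition flip (p : bool * bool) := (~~ p.1, ~~ p.2).
Definition flip_if (l : bool) p := if l then flip p else p.
Definition idx := (bool * (bool * bool))%type.

Lemma flipK : involutive flip.
Proof. by case=> [[] []]. Qed.

Lemma flip_ifK l : involutive (flip_if l).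
Proof. by case: l => // p; rewrite /= flipK. Qed.

Section Presentation.
Variables (k : fieldType) (R : algType k).
Hypothesis two_neq0 : 2%:R != 0 :> k.
Variables b c z : R.
Hypothesis rels : H_relations b c z.

Definition prim_idem (p : bool * bool) : R := eigproj b p.1 * eigproj c p.2.
Definition Hbasis (n : idx) : R := z ^+ n.1 * prim_idem n.2.
Local Notation e := prim_idem.
Local Notation B := Hbasis.

Lemma prim_idemE p : e p = 4%:R^-1 *: ((1 + (-1) ^+ p.1 *: b) * (1 + (-1) ^+ p.2 *: c)).
Proof.
by rewrite /e /eigproj -scalerAl -scalerAr scalerA -invfM -natrM.
Qed.

Lemma comm_eigproj_bc s t : GRing.comm (eigproj c t) (eigproj b s).
Proof.
apply: commr_sym; apply: comm_eigproj; apply: commr_sym; apply: comm_eigproj.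
exact/commr_sym/(rel_bc rels).
Qed.

Lemma prim_idemM p q : e p * e q = if p == q then e p else 0.
Proof.
rewrite /e mulrA -(mulrA (eigproj b _)) comm_eigproj_bc mulrA.
rewrite (eigprojM two_neq0 (rel_bb rels)) -mulrA (eigprojM two_neq0 (rel_cc rels)).
case: p q => [s t] [s' t'] /=.
by rewrite xpair_eqE; case: eqP; case: eqP; rewrite ?mulr0 ?mul0r.
Qed.

Lemma sum_prim_idem : \sum_p e p = 1.
Proof.
rewrite -(pair_bigA _ (fun s t => eigproj b s * eigproj c t)) /=.
under eq_bigr do rewrite -mulr_sumr (sum_eigproj two_neq0 c) mulr1.
exact: sum_eigproj.
Qed.

Lemma b_prim_idem p : b * e p = (-1) ^+ p.1 *: e p.
Proof. by rewrite /e mulrA (mul_eigproj (rel_bb rels)) scalerAl. Qed.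

Lemma c_prim_idem p : c * e p = (-1) ^+ p.2 *: e p.
Proof.
rewrite /e mulrA (comm_eigproj _ (esym (rel_bc rels))) -mulrA.
by rewrite (mul_eigproj (rel_cc rels)) scalerAr.
Qed.

Lemma z_prim_idem p : z * e p = e (flip p) * z.
Proof.
rewrite /e mulrA (anticomm_eigproj _ (rel_zb rels)) -!mulrA.
by rewrite (anticomm_eigproj _ (rel_zc rels)).
Qed.

Lemma prim_idem_zX (l : bool) p : e p * z ^+ l = z ^+ l * e (flip_if l p).
Proof.
by case: l; rewrite /= ?expr0 ?expr1 ?mulr1 ?mul1r // z_prim_idem flipK.
Qed.

Lemma Hbasis_false p : B (false, p) = e p.
Proof. exact: mul1r. Qed.

Lemma Hbasis_true p : B (true, p) = z * e p.
Proof. by []. Qed.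

Lemma HbasisE n : B n = e (flip_if n.1 n.2) * z ^+ n.1.
Proof. by rewrite prim_idem_zX flip_ifK. Qed.

Lemma HbasisM m n : B m * B n =
  if (flip_if n.1 m.2 == n.2) && ~~ (m.1 && n.1) then B (m.1 || n.1, n.2) else 0.
Proof.
case: m n => [l p] [l' q]; rewrite /B /= mulrA -(mulrA _ (e p)) prim_idem_zX.
rewrite mulrA -mulrA prim_idemM; case: eqP => [<- | _] /=; last by rewrite !mulr0.
by case: l l' => [] []; rewrite /= ?expr1 ?expr0 ?mul1r ?(rel_zz rels) ?mul0r ?mulr1.
Qed.

Lemma Hbasis_sandwich l p m :
  e (flip_if l p) * B m * e p = if m == (l, p) then B (l, p) else 0.
Proof.
rewrite -!Hbasis_false HbasisM.
case: m => l' q; case: l l' => [] [] /=; case: p q => [[] []] [[] []] /=;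
  by rewrite ?mul0r ?HbasisM.
Qed.

Definition span_on (S : idx -> Prop) (x : R) : Prop :=
  exists2 a : idx -> k, x = \sum_n a n *: B n & forall n, a n != 0 -> S n.

Lemma span_on_sub (S S' : idx -> Prop) x :
  (forall n, S n -> S' n) -> span_on S x -> span_on S' x.
Proof. by move=> SS' [a xE Sa]; exists a => // n /Sa /SS'. Qed.

Section Span.
Variable S : idx -> Prop.

Lemma span_on0 : span_on S 0.
Proof. by exists (fun=> 0) => [|n]; rewrite ?eqxx // big1 // => n _; rewrite scale0r. Qed.

Lemma span_onD x y : span_on S x -> span_on S y -> span_on S (x + y).
Proof.
move=> [a -> Sa] [a' -> Sa']; exists (fun n => a n + a' n).
  by rewrite -big_split; apply: eq_bigr => n _; rewrite scalerDl.
by move=> n; case: (eqVneq (a n) 0) => [-> | /Sa //]; rewrite add0r => /Sa'.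
Qed.

Lemma span_onZ t x : span_on S x -> span_on S (t *: x).
Proof.
move=> [a -> Sa]; exists (fun n => t * a n) => [|n].
  by rewrite scaler_sumr; apply: eq_bigr => n _; rewrite scalerA.
by rewrite mulf_eq0 negb_or => /andP[_ /Sa].
Qed.

Lemma span_on_sum (I : finType) (F : I -> R) :
  (forall i, span_on S (F i)) -> span_on S (\sum_i F i).
Proof. by move=> SF; apply: big_ind => //; [apply: span_on0 | apply: span_onD]. Qed.

Lemma span_on_Hbasis n : S n -> span_on S (B n).
Proof.
move=> Sn; exists (fun m => if m == n then 1 else 0) => [|m].
  by rewrite (bigD1 n) //= eqxx scale1r big1 ?addr0 // => m /negbTE ->; rewrite scale0r.
by case: (m =P n) => [-> | _]; rewrite ?eqxx.
Qed.

Lemma Hbasis_coord (a : idx -> k) l p :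
  e (flip_if l p) * (\sum_m a m *: B m) * e p = a (l, p) *: B (l, p).
Proof.
rewrite mulr_sumr mulr_suml (bigD1 (l, p)) //= big1 ?addr0.
  by rewrite -scalerAr -scalerAl Hbasis_sandwich eqxx.
by move=> m /negbTE nm; rewrite -scalerAr -scalerAl Hbasis_sandwich nm scaler0.
Qed.

Lemma span_on_Hbasis_inv n : B n != 0 -> span_on S (B n) -> S n.
Proof.
case: n => l p Bn0 [a Ba Sa]; apply: Sa; apply: contraNneq Bn0 => a0.
have := Hbasis_sandwich l p (l, p); rewrite eqxx => <-.
by rewrite Ba Hbasis_coord a0 scale0r.
Qed.

Definition closed_support : Prop :=
  forall p, S (false, p) -> S (true, p) /\ S (true, flip p).

Section ClosedSupport.
Hypothesis S_closed : closed_support.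

Lemma span_on_HbasisM m n :
  S n -> span_on S (B m * B n) /\ span_on S (B n * B m).
Proof.
case: m n => l p [l' q] Sn; rewrite !HbasisM /=.
split; case: ifP => [/andP[/eqP pq ll'] | _]; try exact: span_on0;
  apply: span_on_Hbasis.
- by case: l l' ll' Sn {pq} => [] [] // _ /S_closed[].
- by rewrite -pq; case: l l' ll' Sn {pq} => [] [] // _ /S_closed[].
Qed.

Lemma span_on_mul h x :
  span_on xpredT h -> span_on S x -> span_on S (h * x) /\ span_on S (x * h).
Proof.
move=> [a' -> _] [a -> Sa].
have term m n : span_on S ((a' m *: B m) * (a n *: B n)) /\
                span_on S ((a n *: B n) * (a' m *: B m)).
  rewrite -!scalerAl -!scalerAr.
  case: (eqVneq (a n) 0) => [-> | /Sa Sn].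
    by rewrite !(scale0r, scaler0); split; apply: span_on0.
  by have [SBmn SBnm] := span_on_HbasisM m Sn; split; do 2!apply: span_onZ.
split; rewrite mulr_suml; apply: span_on_sum => i;
  rewrite mulr_sumr; apply: span_on_sum => j.
- exact: (term i j).1.
- exact: (term j i).2.
Qed.

End ClosedSupport.
End Span.

Lemma closed_support_predT : closed_support xpredT.
Proof. by []. Qed.

Lemma span_on_predT_mul x y :
  span_on xpredT x -> span_on xpredT y -> span_on xpredT (x * y).
Proof. by move=> Sx /(span_on_mul closed_support_predT Sx) []. Qed.

Lemma span_on_prim_idem p : span_on xpredT (e p).
Proof. by rewrite -Hbasis_false; apply: span_on_Hbasis. Qed.

Lemma span_on_generators :
  [/\ span_on xpredT 1, span_on xpredT b, span_on xpredT c & span_on xpredT z].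
Proof.
have span_sum_idem (f : bool * bool -> k) : span_on xpredT (\sum_p f p *: e p).
  by apply: span_on_sum => p; apply/span_onZ/span_on_prim_idem.
split.
- by rewrite -sum_prim_idem; apply: span_on_sum => p; apply: span_on_prim_idem.
- rewrite -[b]mulr1 -sum_prim_idem mulr_sumr.
  under eq_bigr do rewrite b_prim_idem; exact: span_sum_idem.
- rewrite -[c]mulr1 -sum_prim_idem mulr_sumr.
  under eq_bigr do rewrite c_prim_idem; exact: span_sum_idem.
- rewrite -[z]mulr1 -sum_prim_idem mulr_sumr; apply: span_on_sum => p.
  exact: (@span_on_Hbasis xpredT (true, p)).
Qed.

Lemma span_on_monomial (i j l : bool) : span_on xpredT (b ^+ i * c ^+ j * z ^+ l).
Proof.
have [S1 Sb Sc Sz] := span_on_generators.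
by case: i j l => [] [] []; do ?apply: span_on_predT_mul.
Qed.

End Presentation.

(** * Computations with the matrices Hb, Hc, Hz *)

(* Matrices of ['M[k]_8] do not compute, so identities between [Hb], [Hc], [Hz],
   whose entries are integers, are checked on integer-valued functions. *)
Definition zmx := nat -> nat -> int.
Definition zmx_sum (F : nat -> int) : int := foldr (fun t acc => F t + acc) 0 (iota 0 8).
Definition zmx_mul (A B : zmx) : zmx := fun i j => zmx_sum (fun t => A i t * B t j).
Definition zmx_add (A B : zmx) : zmx := fun i j => A i j + B i j.
Definition zmx_opp (A : zmx) : zmx := fun i j => - A i j.
Definition zmx1 : zmx := fun i j => (i == j)%:Z.
Definition zmx0 : zmx := fun _ _ => 0.
Definition zmx_eqb (A B : zmx) : bool :=
  all (fun i => all (fun j => A i j == B i j) (iota 0 8)) (iota 0 8).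

Definition zHb : zmx := fun r s =>
  ((bitb r != bitb s) && (bitc r == bitc s) && (bitz r == bitz s))%:Z.
Definition zHc : zmx := fun r s =>
  ((bitb r == bitb s) && (bitc r != bitc s) && (bitz r == bitz s))%:Z.
Definition zHz : zmx := fun r s =>
  if [&& ~~ bitz s, bitz r, bitb r == bitb s & bitc r == bitc s]
  then (-1) ^+ (bitb s + bitc s) else 0.

Section IntegerMatrices.
Variable k : fieldType.

Definition mx_of_zmx (A : zmx) : 'M[k]_8 := \matrix_(i, j) (A i j)%:~R.

Lemma zmx_sumE F : zmx_sum F = \sum_(t < 8) F t.
Proof. by rewrite !big_ord_recl big_ord0. Qed.

Lemma mx_of_zmxM A B : mx_of_zmx A * mx_of_zmx B = mx_of_zmx (zmx_mul A B).
Proof.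
apply/matrixP => i j; rewrite !mxE /zmx_mul zmx_sumE rmorph_sum.
by apply: eq_bigr => t _; rewrite !mxE rmorphM.
Qed.

Lemma mx_of_zmxD A B : mx_of_zmx A + mx_of_zmx B = mx_of_zmx (zmx_add A B).
Proof. by apply/matrixP => i j; rewrite !mxE rmorphD. Qed.

Lemma mx_of_zmxN A : - mx_of_zmx A = mx_of_zmx (zmx_opp A).
Proof. by apply/matrixP => i j; rewrite !mxE rmorphN. Qed.

Lemma mx_of_zmx1 : 1 = mx_of_zmx zmx1.
Proof. by apply/matrixP => i j; rewrite !mxE pmulrn. Qed.

Lemma mx_of_zmx0 : 0 = mx_of_zmx zmx0.
Proof. by apply/matrixP => i j; rewrite !mxE. Qed.

Lemma mx_of_zmx_eq A B : zmx_eqb A B -> mx_of_zmx A = mx_of_zmx B.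
Proof.
move=> /allP AB; apply/matrixP => i j; rewrite !mxE.
have /AB /allP /(_ j) : (i : nat) \in iota 0 8 by rewrite mem_iota ltn_ord.
by rewrite mem_iota ltn_ord => /(_ isT) /eqP ->.
Qed.

Lemma HbE : Hb k = mx_of_zmx zHb.
Proof. by apply/matrixP => i j; rewrite !mxE pmulrn. Qed.

Lemma HcE : Hc k = mx_of_zmx zHc.
Proof. by apply/matrixP => i j; rewrite !mxE pmulrn. Qed.

Lemma HzE : Hz k = mx_of_zmx zHz.
Proof.
apply/matrixP => i j; rewrite !mxE /zHz; case: ifP => // _.
by rewrite rmorphXn rmorphN1.
Qed.

End IntegerMatrices.

Ltac zmx_compute :=
  rewrite ?HbE ?HcE ?HzE ?mx_of_zmx1 ?mx_of_zmx0;
  rewrite ?(mx_of_zmxM, mx_of_zmxD, mx_of_zmxN);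
  apply: mx_of_zmx_eq; vm_compute; reflexivity.

Lemma matrix_H_relations (k : fieldType) : H_relations (Hb k) (Hc k) (Hz k).
Proof. by split; zmx_compute. Qed.

Lemma mx_of_zmx_entry (k : fieldType) (A : zmx) (i j : 'I_8) :
  A i j = 1 -> mx_of_zmx k A i j = 1.
Proof. by rewrite mxE => ->. Qed.

(* In the left regular representation the first column of (the matrix of) x is
   the coordinate vector of x, and z (1 +- b) (1 +- c) has z-coordinate 1. *)
Lemma Hz_sign_entry (k : fieldType) (s t : bool) :
  (Hz k * ((1 + (-1) ^+ s *: Hb k) * (1 + (-1) ^+ t *: Hc k)))
    (Ordinal (isT : (4 < 8)%N)) ord0 = 1.
Proof.
case: s t => [] []; rewrite ?expr0 ?expr1 ?scale1r ?scaleN1r HbE HcE HzE mx_of_zmx1;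
  rewrite ?(mx_of_zmxM, mx_of_zmxD, mx_of_zmxN); apply: mx_of_zmx_entry; vm_compute;
  reflexivity.
Qed.

Lemma Hz_prim_idem_neq0 (k : fieldType) (two_neq0 : 2%:R != 0 :> k) p :
  Hz k * prim_idem (Hb k) (Hc k) p != 0.
Proof.
rewrite prim_idemE -scalerAr scaler_eq0 negb_or invr_eq0 -[4%N]/(2 * 2)%N natrM.
rewrite mulf_neq0 //=; apply/eqP => /matrixP /(_ (Ordinal (isT : (4 < 8)%N)) ord0).
by rewrite Hz_sign_entry mxE => /eqP; rewrite oner_eq0.
Qed.

(** * Closed supports *)

Definition sign_pairs : seq (bool * bool) :=
  [:: (false, false); (false, true); (true, false); (true, true)].
Lemma mem_sign_pairs p : p \in sign_pairs.
Proof. by case: p => [[] []]. Qed.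

Definition idx_enum : seq idx := [seq (l, p) | l <- [:: false; true], p <- sign_pairs].

Lemma mem_idx_enum n : n \in idx_enum.
Proof. by case: n => [[] [[] []]]. Qed.

Definition closedb (S : pred idx) : bool :=
  all (fun p => S (false, p) ==> S (true, p) && S (true, flip p)) sign_pairs.

Definition closure (T : pred idx) : pred idx :=
  fun n => T n || n.1 && (T (false, n.2) || T (false, flip n.2)).

Lemma closedbP (S : pred idx) : reflect (closed_support S) (closedb S).
Proof.
apply: (iffP allP) => [Sc p Sp | Sc p _].
- by have /implyP/(_ Sp)/andP[] := Sc p (mem_sign_pairs p).
- by apply/implyP => /Sc[-> ->].
Qed.

Lemma closure_closed T : closed_support (closure T).
Proof. by move=> p; rewrite /closure /= flipK orbF => ->; rewrite !orbT. Qed.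

(* Subsets of [idx] are enumerated as bit sequences, so that statements about
   all of them can be decided by [vm_compute]. *)
Definition pred_of_bits (v : seq bool) : pred idx :=
  fun n => nth false v (index n idx_enum).

Lemma pred_of_bitsE (S : pred idx) : pred_of_bits (map S idx_enum) =1 S.
Proof.
move=> n; rewrite /pred_of_bits (nth_map n) ?nth_index ?index_mem //;
  exact: mem_idx_enum.
Qed.

Fixpoint bitseqs (m : nat) : seq (seq bool) :=
  if m is m'.+1 then [seq x :: v | x <- [:: false; true], v <- bitseqs m'] else [:: [::]].

Lemma mem_bitseqs v : v \in bitseqs (size v).
Proof.
elim: v => // x v IHv.
by apply: (allpairs_f (fun x v => x :: v)) => //; case: x.
Qed.

(* The paper's idempotent e_i is [prim_idem (idem_signs i)]: b acts on it by
   (-1)^(i/2) and c by (-1)^(i mod 2). *)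
Definition idem_signs (i : nat) : bool * bool := (odd i./2, odd i).

Definition paper_support (G : seq nat * seq nat) : pred idx :=
  fun n => n.2 \in map idem_signs (if n.1 then G.1 else G.2).

(* The generators of [gens49], in order, each written as z e_A + e_C with
   e_A = \sum_(i in A) e_i (see [paper_gen]). *)
Definition paper_gens : seq (seq nat * seq nat) :=
  [:: ([::], [::]); ([::], [:: 0; 1; 2; 3]);
      ([::], [:: 0]); ([::], [:: 1]); ([::], [:: 2]); ([::], [:: 3]);
      ([::], [:: 0; 1]); ([::], [:: 0; 2]); ([::], [:: 0; 3]);
      ([::], [:: 1; 2]); ([::], [:: 1; 3]); ([::], [:: 2; 3]);
      ([::], [:: 0; 1; 2]); ([::], [:: 0; 1; 3]); ([::], [:: 0; 2; 3]);
      ([::], [:: 1; 2; 3]);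
      ([:: 0; 1; 2; 3], [::]);
      ([:: 0], [::]); ([:: 1], [::]); ([:: 2], [::]); ([:: 3], [::]);
      ([:: 0; 1], [::]); ([:: 0; 2], [::]); ([:: 0; 3], [::]);
      ([:: 1; 2], [::]); ([:: 1; 3], [::]); ([:: 2; 3], [::]);
      ([:: 0; 1; 2], [::]); ([:: 0; 1; 3], [::]); ([:: 0; 2; 3], [::]);
      ([:: 1; 2; 3], [::]);
      ([:: 0; 1; 2; 3], [:: 0]); ([:: 1], [:: 0]); ([:: 2], [:: 0]);
      ([:: 0; 1; 2; 3], [:: 1]); ([:: 0], [:: 1]); ([:: 3], [:: 1]);
      ([:: 0; 1; 2; 3], [:: 2]); ([:: 0], [:: 2]); ([:: 3], [:: 2]);
      ([:: 0; 1; 2; 3], [:: 3]); ([:: 1], [:: 3]); ([:: 2], [:: 3]);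
      ([:: 0; 1; 2; 3], [:: 0; 3]); ([:: 1], [:: 0; 3]); ([:: 2], [:: 0; 3]);
      ([:: 0; 1; 2; 3], [:: 1; 2]); ([:: 0], [:: 1; 2]); ([:: 3], [:: 1; 2])].

Lemma paper_gens_uniq :
  all (fun G => uniq (map idem_signs G.1) && uniq (map idem_signs G.2)) paper_gens.
Proof. by []. Qed.

Lemma closures_cover_bits :
  all (fun v => closedb (pred_of_bits v) ==>
         has (fun G => all (fun n => closure (paper_support G) n == pred_of_bits v n) idx_enum)
             paper_gens)
      (bitseqs 8).
Proof. by vm_compute. Qed.

Lemma closures_uniq : uniq [seq map (closure (paper_support G)) idx_enum | G <- paper_gens].
Proof. by vm_compute. Qed.

Lemma closures_cover (S : pred idx) :
  closedb S -> exists2 G, G \in paper_gens & closure (paper_support G) =1 S.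
Proof.
set v := map S idx_enum; have SE := pred_of_bitsE S.
have -> : closedb S = closedb (pred_of_bits v).
  by apply: eq_all => p; rewrite !SE.
have vP : v \in bitseqs 8 := mem_bitseqs v.
move/allP/(_ v vP)/implyP: closures_cover_bits => H /H /hasP [G GS /allP clG].
exists G => // n.
by rewrite -SE; apply/eqP/clG/mem_idx_enum.
Qed.

(** * Ideals of H *)

Section IdealsOfH.
Variable k : fieldType.
Hypothesis two_neq0 : 2%:R != 0 :> k.

Local Notation b := (Hb k).
Local Notation c := (Hc k).
Local Notation z := (Hz k).
Local Notation e := (prim_idem b c).
Local Notation B := (Hbasis b c z).
Local Notation spanH := (span_on b c z).
Let rels := matrix_H_relations k.

Lemma inH0 : inH (0 : 'M[k]_8).
Proof. by exists (fun=> 0); rewrite big1 // => n _; rewrite scale0r. Qed.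

Lemma inHD (x y : 'M[k]_8) : inH x -> inH y -> inH (x + y).
Proof.
move=> [a ->] [a' ->]; exists (fun n => a n + a' n).
by rewrite -big_split; apply: eq_bigr => n _; rewrite scalerDl.
Qed.

Lemma inHZ t (x : 'M[k]_8) : inH x -> inH (t *: x).
Proof.
move=> [a ->]; exists (fun n => t * a n).
by rewrite scaler_sumr; apply: eq_bigr => n _; rewrite scalerA.
Qed.

Lemma inH_monomial (i j l : bool) : inH (b ^+ i * c ^+ j * z ^+ l).
Proof.
have [n ->] : exists n : 'I_8, b ^+ i * c ^+ j * z ^+ l = Hmono k n.
  by exists (inord (i + 2 * j + 4 * l)); rewrite /Hmono inordK; case: i j l => [] [] [].
exists (fun m => (m == n)%:R).
by rewrite (bigD1 n) //= eqxx scale1r big1 ?addr0 // => m /negbTE ->; rewrite scale0r.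
Qed.

Lemma inH_Hbasis n : inH (B n).
Proof.
case: n => l p; rewrite (HbasisE rels) prim_idemE -scalerAl /=; apply: inHZ.
rewrite !mulrDr !mulrDl !mulr1 !mul1r -!scalerAl -!scalerAr -!scalerAl.
repeat apply: inHD; rewrite ?scalerA; try apply: inHZ.
- by have := inH_monomial false false l; rewrite !expr0 !mul1r.
- by have := inH_monomial true false l; rewrite expr1 expr0 mulr1.
- by have := inH_monomial false true l; rewrite expr1 expr0 mul1r.
- by have := inH_monomial true true l; rewrite !expr1.
Qed.

Lemma inH_sum (J : finType) (F : J -> 'M[k]_8) : (forall j, inH (F j)) -> inH (\sum_j F j).
Proof. by move=> HF; apply: big_ind => //; [exact: inH0 | exact: inHD]. Qed.

Lemma inH1 : inH (1 : 'M[k]_8).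
Proof. by have := inH_monomial false false false; rewrite !expr0 !mul1r. Qed.

Lemma inH_z : inH z.
Proof. by have := inH_monomial false false true; rewrite expr1 !expr0 !mul1r. Qed.

Lemma inH_prim_idem p : inH (e p).
Proof. by rewrite -(Hbasis_false b c z); apply: inH_Hbasis. Qed.

Lemma inH_spanE x : inH x <-> spanH xpredT x.
Proof.
split=> [[a ->] | [a -> _]].
- apply: span_on_sum => n; apply: span_onZ; exact: span_on_monomial.
- by apply: inH_sum => n; apply/inHZ/inH_Hbasis.
Qed.

Lemma is_ideal_span_on S : closed_support S -> is_ideal (spanH S).
Proof.
move=> S_closed; split.
- by move=> x [a xE _]; apply/inH_spanE; exists a.
- exact: span_on0.
- exact: span_onD.
- by move=> h x /inH_spanE; apply: (span_on_mul two_neq0 rels).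
Qed.

Lemma Hbasis_neq0 n : B n != 0.
Proof.
have ze_neq0 := Hz_prim_idem_neq0 two_neq0; case: n => [[] p]; first exact: ze_neq0.
by rewrite Hbasis_false; apply: contraNneq (ze_neq0 p) => ->; rewrite mulr0.
Qed.

Section Ideal.
Variable I : 'M[k]_8 -> Prop.
Hypothesis idI : is_ideal I.

Lemma ideal_mull h x : inH h -> I x -> I (h * x).
Proof. by have [_ _ _ IM] := idI; move=> Hh /(IM h _ Hh) []. Qed.

Lemma ideal_mulr h x : inH h -> I x -> I (x * h).
Proof. by have [_ _ _ IM] := idI; move=> Hh /(IM h _ Hh) []. Qed.

Lemma idealZ t x : I x -> I (t *: x).
Proof. by move=> Ix; rewrite -[x]mul1r scalerAl; apply: ideal_mull (inHZ t inH1) Ix. Qed.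

Lemma ideal_sum (J : finType) (F : J -> 'M[k]_8) : (forall j, I (F j)) -> I (\sum_j F j).
Proof. by have [_ I0 ID _] := idI; move=> IF; apply: big_ind. Qed.

Lemma ideal_Hbasis_coord (a : idx -> k) l p :
  I (\sum_m a m *: B m) -> I (a (l, p) *: B (l, p)).
Proof.
move=> Ix; rewrite -(Hbasis_coord two_neq0 rels).
exact: ideal_mulr (inH_prim_idem p) (ideal_mull (inH_prim_idem _) Ix).
Qed.

Lemma ideal_spanE x : I x <-> spanH (fun n => I (B n)) x.
Proof.
have [IH I0 _ _] := idI; split=> [Ix | [a -> Ia]].
- have [a xE _] := (inH_spanE x).1 (IH x Ix); exists a => // -[l p] a0.
  move: Ix; rewrite xE => /(ideal_Hbasis_coord l p) /(idealZ (a (l, p))^-1).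
  by rewrite scalerA mulVf // scale1r.
- apply: ideal_sum => n; have [-> | /Ia] := eqVneq (a n) 0; first by rewrite scale0r.
  exact: idealZ.
Qed.

Lemma ideal_support_closed : closed_support (fun n => I (B n)).
Proof.
move=> p; rewrite Hbasis_true Hbasis_false => Ip; split.
  exact: ideal_mull inH_z Ip.
by rewrite Hbasis_true (z_prim_idem rels) flipK; apply: ideal_mulr inH_z Ip.
Qed.

End Ideal.

Lemma same_ideal_Hbasis (I J : 'M[k]_8 -> Prop) : is_ideal I -> is_ideal J ->
  (forall n, I (B n) <-> J (B n)) -> same_ideal I J.
Proof.
move=> idI idJ IJ x; split=> [/(ideal_spanE idI) | /(ideal_spanE idJ)] Sx.
- by apply/(ideal_spanE idJ); apply: span_on_sub Sx => n /IJ.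
- by apply/(ideal_spanE idI); apply: span_on_sub Sx => n /IJ.
Qed.

Lemma is_ideal_inH : is_ideal (@inH k).
Proof.
split=> //; [exact: inH0 | exact: inHD |].
move=> h x /inH_spanE Hh /inH_spanE Hx.
by split; apply/inH_spanE; apply: (span_on_predT_mul two_neq0 rels).
Qed.

Lemma is_ideal_gen_ideal (g : 'M[k]_8) : inH g -> is_ideal (gen_ideal g).
Proof.
move=> Hg; split.
- by move=> x /(_ _ is_ideal_inH Hg).
- by move=> I [].
- by move=> x y Ix Iy I idI Ig; have [_ _ ID _] := idI; apply: ID; [apply: Ix | apply: Iy].
- move=> h x Hh Ix; split=> I idI Ig.
    by apply: (ideal_mull idI Hh); apply: Ix.
  by apply: (ideal_mulr idI Hh); apply: Ix.
Qed.

Lemma gen_ideal_Hbasis (T : pred idx) n :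
  gen_ideal (\sum_m (T m)%:R *: B m) (B n) <-> closure T n.
Proof.
set g := \sum_m _.
have gT : spanH T g by exists (fun m => (T m)%:R) => // m; case: (T m); rewrite ?eqxx.
split=> [gB | clTn I idI Ig].
  apply: (span_on_Hbasis_inv two_neq0 rels (S := closure T) (Hbasis_neq0 n)); apply: gB.
    exact/is_ideal_span_on/closure_closed.
  by apply: span_on_sub gT => m Tm; rewrite /closure Tm.
have IT m : T m -> I (B m).
  by case: m => l p Tm; have := ideal_Hbasis_coord idI l p Ig; rewrite Tm scale1r.
case: n clTn => l p /orP[/IT // | /andP[/= -> /orP[/IT | /IT]]].
  by case/(ideal_support_closed idI).
by case/(ideal_support_closed idI) => _; rewrite flipK.
Qed.

Definition paper_gen (G : seq nat * seq nat) : 'M[k]_8 :=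
  z * \sum_(i <- G.1) e (idem_signs i) + \sum_(i <- G.2) e (idem_signs i).

Lemma prim_idem_paper :
  [/\ e (false, false) = e0 k, e (false, true) = e1 k, e (true, false) = e2 k
    & e (true, true) = e3 k].
Proof. by split; rewrite prim_idemE /= ?expr0 ?expr1 ?scale1r ?scaleN1r. Qed.

Lemma sum_e0123 : e0 k + e1 k + e2 k + e3 k = 1.
Proof.
have [<- <- <- <-] := prim_idem_paper.
rewrite -(sum_prim_idem two_neq0 b c) -(pair_bigA _ (fun s t => e (s, t))) /=.
rewrite !big_bool /= [e (true, true) + _]addrC [e (false, true) + _]addrC.
by rewrite [RHS]addrC addrA.
Qed.

Lemma gens49E : gens49 k = map paper_gen paper_gens.
Proof.
have [E0 E1 E2 E3] := prim_idem_paper.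
rewrite /paper_gen /= !big_cons !big_nil /= E0 E1 E2 E3.
repeat (apply: (f_equal2 cons); last first).
all: by rewrite ?mulr0 ?add0r ?addr0 ?addrA ?sum_e0123 ?mulr1.
Qed.

Lemma sum_prim_idem_seq (s : seq (bool * bool)) :
  uniq s -> \sum_(p <- s) e p = \sum_p (p \in s)%:R *: e p.
Proof.
move=> us; rewrite big_uniq // big_mkcond; apply: eq_bigr => p _.
by case: (p \in s); rewrite ?scale1r ?scale0r.
Qed.

Lemma paper_genE G : uniq (map idem_signs G.1) -> uniq (map idem_signs G.2) ->
  paper_gen G = \sum_n (paper_support G n)%:R *: B n.
Proof.
move=> u1 u2; rewrite /paper_gen -!(big_map idem_signs xpredT) !sum_prim_idem_seq //.
rewrite -(pair_bigA _ (fun l p => (paper_support G (l, p))%:R *: B (l, p))) big_bool /=.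
rewrite mulr_sumr; congr (_ + _); apply: eq_bigr => p _.
  by rewrite -scalerAr.
by rewrite Hbasis_false.
Qed.

Lemma gen_ideal_paper_gen G n : G \in paper_gens ->
  gen_ideal (paper_gen G) (B n) <-> closure (paper_support G) n.
Proof.
move=> GS; have /allP/(_ G GS)/andP[u1 u2] := paper_gens_uniq.
by rewrite paper_genE //; apply: gen_ideal_Hbasis.
Qed.

Lemma inH_paper_gen G : G \in paper_gens -> inH (paper_gen G).
Proof.
move=> GS; have /allP/(_ G GS)/andP[u1 u2] := paper_gens_uniq.
by rewrite paper_genE //; apply/inH_spanE; exists (fun n => (paper_support G n)%:R).
Qed.

Lemma ideal_classification (I : 'M[k]_8 -> Prop) : is_ideal I ->
  exists2 g, g \in gens49 k & same_ideal I (gen_ideal g).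
Proof.
move=> idI.
pose S n : bool := if excluded_middle_informative (I (B n)) then true else false.
have SI n : S n <-> I (B n) by rewrite /S; case: excluded_middle_informative.
have S_closed : closedb S.
  apply/closedbP => p /SI /(ideal_support_closed idI) [].
  by split; apply/SI.
have [G GS clG] := closures_cover S_closed.
exists (paper_gen G); first by rewrite gens49E map_f.
apply: same_ideal_Hbasis => // [|n]; first exact/is_ideal_gen_ideal/inH_paper_gen.
by rewrite gen_ideal_paper_gen // clG SI.
Qed.

Lemma gens49_distinct i j : (i < 49)%N -> (j < 49)%N ->
  same_ideal (gen_ideal (nth 0 (gens49 k) i)) (gen_ideal (nth 0 (gens49 k) j)) -> i = j.
Proof.
rewrite -[49%N]/(size paper_gens) => ilt jlt.
rewrite gens49E !(nth_map ([::], [::])) // => same.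
have GiS := mem_nth ([::], [::]) ilt; have GjS := mem_nth ([::], [::]) jlt.
pose cl G := map (closure (paper_support G)) idx_enum.
have : cl (nth ([::], [::]) paper_gens i) = cl (nth ([::], [::]) paper_gens j).
  apply: eq_map => n; apply/idP/idP.
  - by move/(gen_ideal_paper_gen n GiS)/same/(gen_ideal_paper_gen n GjS).
  - by move/(gen_ideal_paper_gen n GjS)/same/(gen_ideal_paper_gen n GiS).
rewrite -!(nth_map _ [::] cl) // => /eqP.
by rewrite (nth_uniq _ _ _ closures_uniq) ?size_map // => /eqP.
Qed.

End IdealsOfH.

Theorem theorem5p8 (k : closedFieldType) (char0 : [pchar k] =i pred0) :
  size (gens49 k) = 49%N /\
  (forall I : 'M[k]_8 -> Prop, is_ideal I ->
     exists2 g, g \in gens49 k & same_ideal I (gen_ideal g)) /\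
  (forall i j : nat, (i < 49)%N -> (j < 49)%N ->
     same_ideal (gen_ideal (nth 0 (gens49 k) i)) (gen_ideal (nth 0 (gens49 k) j)) ->
     i = j).
Proof.
have two_neq0 : 2%:R != 0 :> k by rewrite ((pcharf0P k).1 char0).
split; first by [].
by split; [apply: ideal_classification | apply: gens49_distinct].
Qed.
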